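(* Let $\pi = (X_1, \ldots, X_m)$ be a modular organisation. Then for all $1 \le i \le j \le m$, the sequence $(X_1, \ldots, X_{i-1}, \bigcup_{k=i}^{j} X_k, X_{j+1}, \ldots, X_m)$ is a modular organisation.
   Context: Let $A$ be a finite set of agents. For each $a \in A$ let $S_a$ be a nonempty finite set, and let $S = \prod_{a \in A} S_a$ be the set of states. For each $a \in A$ let $\to_a \subseteq S \times S$ be a relation that is either empty or left-total, such that whenever $s \to_a s'$, either $s = s'$ or $s$ and $s'$ differ only in the $a$-component. For $X \subseteq A$ let $\to_X = \bigcup_{a \in X} \to_a$ (so $\to_\emptyset$ is empty) and $\to_X^*$ its reflexive-transitive closure; for $T \subseteq S$, $(T \to_X) = \{ t' : \exists t \in T,\ t \to_X t'\}$. Orbit operator: $\Omega_X(S') = \{ s' : \exists s \in S',\ s \to_X^* s'\}$. Equilibria operator: $\Psi_X(S') = \{ s \in \Omega_X(S') : \forall s' \in S,\ s \to_X^* s' \implies s' \to_X^* s \}$. $M$-relation: for $X, Y \subseteq A$, $X \leadsto Y$ iff for every $S' \subseteq S$, with $T = \Psi_X(\Psi_{X \cup Y}(S'))$, one has $(T \to_Y) \subseteq T$. A modular organisation is an ordered partition $(X_1, \ldots, X_m)$ of $A$ (a sequence of nonempty pairwise disjoint subsets whose union is $A$) such that for all $1 \le i \le m$, $\left(\bigcup_{j=1}^{i-1} X_j\right) \leadsto X_i$ (the empty union being $\emptyset$). *)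

From mathcomp Require Import all_boot.
From Stdlib Require Import Relations.Relation_Operators.
Set Implicit Arguments. Unset Strict Implicit. Unset Printing Implicit Defensive.

Section Modular.
Variable A : finType.
Variable S : A -> finType.
Definition state := {dffun forall a : A, S a}.
Variable step : A -> state -> state -> Prop.

Definition well_formed_system : Prop :=
  (forall a : A, exists x : S a, True) /\
  (forall a : A,
     (forall s s' : state, ~ step a s s') \/
     (forall s : state, exists s', step a s s')) /\
  (forall (a : A) (s s' : state), step a s s' ->
     s = s' \/ (forall b : A, b != a -> s b = s' b)).

Definition stepX (X : {set A}) (s s' : state) : Prop :=
  exists2 a, a \in X & step a s s'.

Definition reachX (X : {set A}) : state -> state -> Prop :=
  clos_refl_trans state (stepX X).

Definition Omega (X : {set A}) (S' : state -> Prop) : state -> Prop :=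
  fun s' => exists2 s, S' s & reachX X s s'.

Definition Psi (X : {set A}) (S' : state -> Prop) : state -> Prop :=
  fun s => Omega X S' s /\ (forall s', reachX X s s' -> reachX X s' s).

Definition Mrel (X Y : {set A}) : Prop :=
  forall S' : state -> Prop,
    let T := Psi X (Psi (X :|: Y) S') in
    forall t t', T t -> stepX Y t t' -> T t'.

(* Modular organisation (X_1,...,X_m), 0-indexed as a sequence *)
Definition modular_org (p : seq {set A}) : Prop :=
  (forall i, i < size p -> nth set0 p i != set0) /\
  (forall i j, i < j -> j < size p -> nth set0 p i :&: nth set0 p j = set0) /\
  \bigcup_(X <- p) X = [set: A] /\
  (forall i, i < size p ->
     Mrel (\bigcup_(X <- take i p) X) (nth set0 p i)).
End Modular.

(* Merge blocks i..j (0-indexed, i <= j) into their union. *)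
Definition merge_blocks (A : finType) (p : seq {set A}) (i j : nat) : seq {set A} :=
  take i p ++ [:: \bigcup_(X <- take (j - i).+1 (drop i p)) X] ++ drop j.+1 p.

From mathcomp Require Import all_boot zify.
From Stdlib Require Import Relations.Relation_Operators Classical ClassicalEpsilon.

Set Implicit Arguments. Unset Strict Implicit. Unset Printing Implicit Defensive.

(* Call s an X-equilibrium when every state X-reachable from s X-reaches s back.
   As the state space is finite, every state X-reaches an X-equilibrium, and
   with this one shows that X ~> Y holds iff every (X u Y)-equilibrium is an
   X-equilibrium.  The M-conditions of a modular organisation therefore say
   that the equilibria of the prefix unions X_1 u ... u X_k shrink as k grows.
   Merging consecutive blocks only deletes some prefixes from this chain, so
   the chain condition survives; nonemptiness, disjointness and covering are
   bookkeeping on the unions of index ranges of blocks. *)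

Lemma exists_terminal (T : finType) (R : T -> T -> Prop) :
    (forall x, R x x) -> (forall x y z, R x y -> R y z -> R x z) ->
  forall u, exists2 v, R u v & forall w, R v w -> R w v.
Proof.
move=> Rxx Rtr u.
pose up x := [set y | is_left (excluded_middle_informative (R x y))].
have upP x y : reflect (R x y) (y \in up x).
  by rewrite inE; case: excluded_middle_informative => h; constructor.
have [n] := ubnP #|up u|; elim: n u => [|n IHn] u lt_u_n //.
have [[w Ruw nRwu] | terminal] := classic (exists2 w, R u w & ~ R w u); last first.
  by exists u => // w Ruw; apply: NNPP => nRwu; apply: terminal; exists w.
have up_wu : up w \proper up u.
  apply/properP; split; first by apply/subsetP => y /upP Rwy; apply/upP; exact: Rtr Ruw Rwy.
  by exists u; [exact/upP | apply/upP].
have [v Rwv terminal] := IHn w (leq_trans (proper_card up_wu) lt_u_n).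
by exists v => //; exact: Rtr Ruw Rwv.
Qed.

Section Equilibria.
Variables (A : finType) (S : A -> finType) (step : A -> state S -> state S -> Prop).
Implicit Types (X Y : {set A}) (s t : state S).

Definition equilibrium X s := forall s', reachX step X s s' -> reachX step X s' s.

Lemma reachX_refl X s : reachX step X s s.
Proof. exact: rt_refl. Qed.

Lemma reachX_trans X s t u :
  reachX step X s t -> reachX step X t u -> reachX step X s u.
Proof. exact: rt_trans. Qed.

Lemma reachX_subset X Y s t : X \subset Y -> reachX step X s t -> reachX step Y s t.
Proof.
move=> sXY; elim=> [u v [a aX st] | u | u v w _ ruv _ rvw].
- by apply: rt_step; exists a => //; exact: (subsetP sXY).
- exact: rt_refl.
- exact: rt_trans ruv rvw.
Qed.

Lemma reachX_closed X (P : state S -> Prop) s t :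
    (forall u u', P u -> stepX step X u u' -> P u') ->
  reachX step X s t -> P s -> P t.
Proof.
move=> Pcl; elim=> [u v suv Pu | // | u v w _ IHuv _ IHvw Pu].
- exact: Pcl Pu suv.
- exact/IHvw/IHuv.
Qed.

Lemma equilibrium_reachX X s t :
  equilibrium X s -> reachX step X s t -> equilibrium X t.
Proof. by move=> eq_s rst u rtu; apply: reachX_trans (eq_s u (reachX_trans rst rtu)) rst. Qed.

Lemma Psi_reachX X S' s t : Psi step X S' s -> reachX step X s t -> Psi step X S' t.
Proof.
move=> [[s0 S's0 rs0s] eq_s] rst; split; last exact: equilibrium_reachX rst.
by exists s0 => //; exact: reachX_trans rs0s rst.
Qed.

Lemma exists_equilibrium X s : exists2 t, reachX step X s t & equilibrium X t.
Proof.
by apply: exists_terminal => [u | u v w]; [exact: reachX_refl | exact: reachX_trans].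
Qed.

Lemma MrelP X Y :
  Mrel step X Y <-> forall s, equilibrium (X :|: Y) s -> equilibrium X s.
Proof.
split=> [MXY s eq_s | eqXY S' /= t t' [[t0 Psi_t0 rt0t] _] [a aY st]].
- pose T := Psi step X (Psi step (X :|: Y) (eq^~ s)).
  have [v rsv eq_v] := exists_equilibrium X s.
  have Psi_s : Psi step (X :|: Y) (eq^~ s) s by split=> //; exists s; last exact: reachX_refl.
  have Tv : T v by split=> //; exists s.
  have T_closed u u' : T u -> stepX step (X :|: Y) u u' -> T u'.
    move=> Tu [b]; rewrite inE => /orP[bX | bY] su.
    + by apply: Psi_reachX Tu _; apply: rt_step; exists b.
    + by apply: (MXY _ u u' Tu); exists b.
  have rvs : reachX step (X :|: Y) v s by apply/eq_s/(reachX_subset (subsetUl X Y)).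
  by have [] := reachX_closed T_closed rvs Tv.
- have Psi_t' : Psi step (X :|: Y) S' t'.
    apply: Psi_reachX (Psi_reachX Psi_t0 (reachX_subset (subsetUl X Y) rt0t)) _.
    by apply: rt_step; exists a; rewrite // inE aY orbT.
  split; first by exists t'; last exact: reachX_refl.
  by apply: eqXY; case: Psi_t'.
Qed.

End Equilibria.

Section Blocks.
Variable A : finType.
Implicit Types (p : seq {set A}) (x : A).

Definition union_blocks p a b := \bigcup_(a <= k < b) nth set0 p k.

Lemma union_blocksP p a b x :
  reflect (exists2 k, a <= k < b & x \in nth set0 p k) (x \in union_blocks p a b).
Proof.
rewrite /union_blocks (big_morph (fun Y : {set A} => x \in Y) (in_setU x) (in_set0 x)) big_has.
by apply: (iffP hasP) => -[k kab xk]; exists k => //; move: kab; rewrite mem_index_iota.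
Qed.

Lemma union_blocks1 p a : union_blocks p a a.+1 = nth set0 p a.
Proof. exact: big_nat1. Qed.

Lemma union_blocks_recr p a b :
  a <= b -> union_blocks p a b.+1 = union_blocks p a b :|: nth set0 p b.
Proof. exact: big_nat_recr. Qed.

Lemma union_blocks_cat p a b c :
  a <= b -> b <= c -> union_blocks p a c = union_blocks p a b :|: union_blocks p b c.
Proof. exact: big_cat_nat. Qed.

Lemma union_blocks_drop p a b c :
  union_blocks (drop a p) b c = union_blocks p (a + b) (a + c).
Proof.
rewrite /union_blocks addnC [a + c]addnC big_addn addnK.
by apply: eq_bigr => k _; rewrite nth_drop addnC.
Qed.

(* Blocks past the end of [p] are [set0], so any bound [n >= size p] will do. *)
Lemma bigcup_seqE p n : size p <= n -> \bigcup_(X <- p) X = union_blocks p 0 n.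
Proof.
move=> le_p_n; rewrite (big_nth set0) /union_blocks (big_cat_nat (leq0n (size p)) le_p_n) /=.
have -> : \bigcup_(size p <= k < n) nth set0 p k = set0.
  by apply: big1_seq => k /=; rewrite mem_index_iota => /andP[le_pk _]; exact: nth_default.
by rewrite setU0.
Qed.

Lemma bigcup_take p k : \bigcup_(X <- take k p) X = union_blocks p 0 k.
Proof.
rewrite (@bigcup_seqE _ k) ?size_take_min ?geq_minl //.
by apply: eq_big_nat => l /andP[_ lt_lk]; rewrite nth_take.
Qed.

End Blocks.

Section Coarsening.
Variables (A : finType) (S : A -> finType) (step : A -> state S -> state S -> Prop).

Lemma equilibrium_prefix_antimono (p : seq {set A}) k l s :
    (forall k, k < size p -> Mrel step (\bigcup_(X <- take k p) X) (nth set0 p k)) ->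
    k <= l -> equilibrium step (union_blocks p 0 l) s ->
  equilibrium step (union_blocks p 0 k) s.
Proof.
move=> Mrel_p le_kl; move: s.
apply: (@homo_leq _ (union_blocks p 0)
  (fun X Y => forall s, equilibrium step Y s -> equilibrium step X s) _ _ _ k l le_kl).
- by move=> X s.
- by move=> Y X Z XY YZ s /YZ /XY.
- move=> m s; rewrite union_blocks_recr //; have [lt_mp | le_pm] := ltnP m (size p).
    by move: (Mrel_p m lt_mp); rewrite bigcup_take => /MrelP; apply.
  by rewrite nth_default ?setU0.
Qed.

Variables (p q : seq {set A}) (f : nat -> nat).
Hypotheses (f0 : f 0 = 0) (f_incr : forall k, f k < f k.+1).
Hypotheses (f_size : f (size q) = size p).
Hypothesis nth_q : forall k, nth set0 q k = union_blocks p (f k) (f k.+1).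

Lemma cut_mono : {homo f : k l / k <= l}.
Proof. exact: homo_leq leqnn leq_trans (fun k => ltnW (f_incr k)). Qed.

Lemma cut_lt_size k : k < size q -> f k < size p.
Proof. by move=> lt_kq; rewrite -f_size; apply: leq_trans (f_incr k) (cut_mono lt_kq). Qed.

Lemma union_blocks_coarsen k : union_blocks q 0 k = union_blocks p 0 (f k).
Proof.
elim: k => [|k IHk]; first by rewrite f0 /union_blocks !big_geq.
by rewrite union_blocks_recr // IHk nth_q -union_blocks_cat // ltnW.
Qed.

Lemma modular_org_coarsen : modular_org step p -> modular_org step q.
Proof.
case=> [nonempty_p [disjoint_p [cover_p Mrel_p]]].
split; [|split; [|split]].
- move=> k lt_kq; have /set0Pn[x xp] := nonempty_p _ (cut_lt_size lt_kq).
  by rewrite nth_q; apply/set0Pn; exists x; apply/union_blocksP; exists (f k); rewrite ?leqnn ?f_incr.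
- move=> k l lt_kl lt_lq; apply/setP => x; rewrite !nth_q inE in_set0.
  apply/negP => /andP[/union_blocksP[m1 /andP[_ lt_m1]] x1 /union_blocksP[m2 /andP[le_m2 lt_m2]] x2].
  have lt_m12 : m1 < m2 by apply: leq_trans lt_m1 (leq_trans (cut_mono lt_kl) le_m2).
  have lt_m2p : m2 < size p by rewrite -f_size; apply: leq_trans lt_m2 (cut_mono lt_lq).
  by move: (disjoint_p _ _ lt_m12 lt_m2p) => /setP/(_ x); rewrite inE x1 x2 in_set0.
- by rewrite (bigcup_seqE (leqnn _)) union_blocks_coarsen f_size -bigcup_seqE.
- move=> k lt_kq; apply/MrelP => s.
  rewrite bigcup_take -union_blocks_recr // !union_blocks_coarsen.
  apply: equilibrium_prefix_antimono => //; exact/cut_mono.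
Qed.

End Coarsening.

Section Merge.
Variables (i j : nat).
Hypothesis le_ij : i <= j.

Definition merge_cut k := if k <= i then k else k + (j - i).

Lemma merge_cut_incr k : merge_cut k < merge_cut k.+1.
Proof. by rewrite /merge_cut; case: (leqP k i); case: (leqP k.+1 i); lia. Qed.

Variables (A : finType) (p : seq {set A}).
Hypothesis lt_jp : j < size p.

Lemma size_merge_blocks : size (merge_blocks p i j) = i + (size p - j).
Proof. rewrite /merge_blocks size_cat /= size_takel ?size_drop; lia. Qed.

Lemma merge_cut_size : merge_cut (size (merge_blocks p i j)) = size p.
Proof. rewrite size_merge_blocks /merge_cut; case: ifP; lia. Qed.

Lemma nth_merge_blocks k :
  nth set0 (merge_blocks p i j) k = union_blocks p (merge_cut k) (merge_cut k.+1).
Proof.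
rewrite /merge_blocks /merge_cut nth_cat size_takel; last lia.
have [lt_ki | le_ik] := ltnP k i.
  by rewrite nth_take // (ltnW lt_ki) union_blocks1.
have [-> | ne_ki] := eqVneq k i.
  rewrite subnn leqnn /= bigcup_take union_blocks_drop addn0.
  by congr union_blocks; lia.
have lt_ik : i < k by rewrite ltn_neqAle eq_sym ne_ki.
rewrite leqNgt lt_ik -(subnSK lt_ik) /= nth_drop.
by rewrite addSn union_blocks1; congr nth; lia.
Qed.

End Merge.

Theorem proposition3 (A : finType) (S : A -> finType)
    (step : A -> state S -> state S -> Prop)
    (Hsys : well_formed_system step)
    (p : seq {set A}) (Hp : modular_org step p)
    (i j : nat) (Hij : i <= j) (Hj : j < size p) :
  modular_org step (merge_blocks p i j).
Proof.
exact: (modular_org_coarsen (f := merge_cut i j) erefl (merge_cut_incr Hij)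
  (merge_cut_size Hij Hj) (nth_merge_blocks Hij Hj) Hp).
Qed.
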